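(* There is a polynomial $p$ such that for all $n,s\ge1$, with $N=2^n$, the polynomial map $\mathcal{G}^{\mathrm{SSSV}}_{n,\lceil\log_2 s\rceil}$ is a $p(\log s,n)$-$\Sigma\Pi\Sigma$-succinct generator for the class of polynomials $F\in\mathbb{F}[X_1,\ldots,X_N]$ having at most $s$ monomials.
   Context: Let $P(z_1,\ldots,z_n,x_1,\ldots,x_n)=\prod_{i=1}^n(z_ix_i+(1-z_i))$, $Q^{\mathrm{SSV}}_{n,k}(y,z,x)=\sum_{j=1}^k y_jP(z_j,x)$ with $z_j=(z_{j,1},\ldots,z_{j,n})$, and $Q^{\mathrm{SSSV}}_{n,k}=Q^{\mathrm{SSV}}_{n,k}+\prod_{i=1}^n(x_i+1)$. $\mathcal{G}^{\mathrm{SSSV}}_{n,k}(y,z)$ is the coefficient vector of $Q^{\mathrm{SSSV}}_{n,k}$ as a multilinear polynomial in $x$, with coordinates indexed by subsets $S\subseteq[n]$ (monomials $x_S=\prod_{i\in S}x_i$) and identified with $X_1,\ldots,X_N$ via $i-1=\sum_{k\in S}2^{k-1}$. A polynomial map $\mathcal{G}:\mathbb{F}^m\to\mathbb{F}^{2^n}$ is an $s'$-$\Sigma\Pi\Sigma$-succinct generator for a class $\mathcal{D}$ of $N$-variate polynomials if (i) for every $\alpha\in\mathbb{F}^m$ the multilinear polynomial $\sum_S\mathcal{G}_S(\alpha)x_S$ is computed by a multilinear depth-3 $\Sigma\Pi\Sigma$ formula of size at most $s'$, and (ii) for every $F\in\mathcal{D}$, $F\not\equiv0$ iff $F\circ\mathcal{G}\not\equiv0$.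 *)

From HB Require Import structures.
From mathcomp Require Import all_boot all_order all_algebra.
From mathcomp Require Import mpoly.
Set Implicit Arguments. Unset Strict Implicit. Unset Printing Implicit Defensive.
Import Order.TTheory GRing.Theory Num.Theory.
Local Open Scope ring_scope.

Section Defs.
Variable F : fieldType.

(* Seed variables: m = k + k*n variables; y_j (j < k) and z_{j,i} (j<k, i<n). *)
Definition nseed (n k : nat) : nat := (k + k * n)%N.

Definition yvar (n k : nat) (j : 'I_k) : {mpoly F[nseed n k]} :=
  'X_(lshift (k * n) j).
Definition zvar (n k : nat) (j : 'I_k) (i : 'I_n) : {mpoly F[nseed n k]} :=
  'X_(rshift k (mxvec_index j i)).

Definition Pxz (n k : nat) (j : 'I_k) : {mpoly {mpoly F[nseed n k]}[n]} :=
  \prod_(i < n) ((zvar j i)%:MP * 'X_i + (1 - zvar j i)%:MP).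

Definition Q_SSV (n k : nat) : {mpoly {mpoly F[nseed n k]}[n]} :=
  \sum_(j < k) (yvar n j)%:MP * Pxz n j.

Definition Q_SSSV (n k : nat) : {mpoly {mpoly F[nseed n k]}[n]} :=
  Q_SSV n k + \prod_(i < n) ('X_i + 1).

Definition mnmS (n : nat) (S : {set 'I_n}) : 'X_{1..n} :=
  [multinom (i \in S : nat) | i < n].

Definition G_SSSV (n k : nat) (S : {set 'I_n}) : {mpoly F[nseed n k]} :=
  (Q_SSSV n k)@_(mnmS S).

(* the subset S corresponding to the coordinate of index i (0-based):
   i = \sum_{k in S} 2^k, i.e. S is the set of binary digits of i *)
Definition set_of_index (n : nat) (i : nat) : {set 'I_n} :=
  [set k : 'I_n | odd (i %/ 2 ^ k)].

(* An affine form c + sum_i a_i x_i; a product gate is a list of affine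
   forms; a formula is a list of product gates (top sum gate). *)
Definition affine (n : nat) := (F * {ffun 'I_n -> F})%type.
Definition spsformula (n : nat) := seq (seq (affine n)).

Definition affine_poly (n : nat) (l : affine n) : {mpoly F[n]} :=
  l.1%:MP + \sum_(i < n) l.2 i *: 'X_i.

Definition sps_poly (n : nat) (f : spsformula n) : {mpoly F[n]} :=
  \sum_(P <- f) \prod_(l <- P) affine_poly l.

Definition affine_supp (n : nat) (l : affine n) : {set 'I_n} :=
  [set i | l.2 i != 0].

Definition sps_multilinear (n : nat) (f : spsformula n) : bool :=
  all (fun P : seq (affine n) =>
         [forall j1 : 'I_(size P), forall j2 : 'I_(size P),
            (j1 < j2)%N ==>
            [disjoint affine_supp (nth (0, [ffun=> 0]) P j1)
                    & affine_supp (nth (0, [ffun=> 0]) P j2)]]) f.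

(* size: one top sum gate, plus for each product gate 1, plus for each
   affine form (a sum gate with its constant) 1 plus its number of
   variable inputs *)
Definition sps_size (n : nat) (f : spsformula n) : nat :=
  (1 + \sum_(P <- f) (1 + \sum_(l <- P) (1 + #|affine_supp l|)))%N.

(* s' is a rational size bound (it is the value p(log s, n) of a polynomial) *)
Definition computed_by_mlsps (n : nat) (s' : rat) (p : {mpoly F[n]}) : Prop :=
  exists f : spsformula n,
    [/\ sps_multilinear f, ((sps_size f)%:R <= s')%R & sps_poly f = p].

(* G : F^m -> F^{2^n} given by polynomials indexed by subsets of [n];
   the coordinate indexed by S is the variable X_{i+1} with
   i = sum_{k in S} 2^k. *)
Definition succinct_generator (n m : nat) (s' : rat)
    (G : {set 'I_n} -> {mpoly F[m]}) (D : {mpoly F[2 ^ n]} -> Prop) : Prop :=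
  (forall alpha : 'I_m -> F,
     computed_by_mlsps s' (\sum_(S : {set 'I_n}) (G S).@[alpha] *: 'X_[mnmS S]))
  /\
  (forall P : {mpoly F[2 ^ n]}, D P ->
     (P != 0) = (P \mPo [tuple G (set_of_index n i) | i < 2 ^ n] != 0)).

Definition sparse (N s : nat) (P : {mpoly F[N]}) : Prop :=
  (size (msupp P) <= s)%N.

End Defs.

From HB Require Import structures.
From mathcomp Require Import all_boot all_order all_algebra.
From mathcomp Require Import mpoly.
From mathcomp Require Import ring.
Import Order.TTheory GRing.Theory Num.Theory.
Set Implicit Arguments. Unset Strict Implicit. Unset Printing Implicit Defensive.
Local Open Scope ring_scope.

(** For fixed seeds [y, z], the coefficient vector of Q^SSSV is the polynomial
    [sum_j y_j prod_i (z_ji x_i + 1 - z_ji) + prod_i (x_i + 1)] itself, a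
    multilinear depth-3 formula with [k + 1] product gates of [n] univariate
    factors.  For the hitting property, a nonzero polynomial with at most [2^k]
    monomials stays nonzero after setting all but some [k] of its variables to
    [1], because [k] variables suffice to isolate one of its monomials.  Taking
    [y_j = X_a - 1] and [z_j] the binary digits of [a], for [a] ranging over
    these [k] variables, makes the generator output [X_a] at coordinate [a] and
    [1] elsewhere, so [P \o G] specializes to that nonzero restriction. *)

Section MultilinearExpansion.
Variables (R : comNzRingType) (n : nat).

Lemma prod_mpolyX_set (S : {set 'I_n}) :
  \prod_(i in S) 'X_i = 'X_[mnmS S] :> {mpoly R[n]}.
Proof.
symmetry; rewrite mpolyXE_id (bigID (mem S)) /= [X in _ * X = _]big1 ?mulr1.
  by apply: eq_bigr => i iS; rewrite mnmE iS expr1.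
by move=> i /negbTE iS; rewrite mnmE iS expr0.
Qed.

Lemma mnmS_inj : injective (@mnmS n).
Proof.
move=> S S' /mnmP eqSS'; apply/setP => i; have := eqSS' i; rewrite !mnmE.
by case: (i \in S); case: (i \in S').
Qed.

Lemma mcoeff_sum_mnmS (c : {set 'I_n} -> R) S :
  (\sum_(S' : {set 'I_n}) c S' *: 'X_[mnmS S'] : {mpoly R[n]})@_(mnmS S) = c S.
Proof.
rewrite raddf_sum (bigD1 S) //= big1 ?addr0 => [|S' neqS'S].
  by rewrite mcoeffZ mcoeffX eqxx mulr1.
by rewrite mcoeffZ mcoeffX inj_eq ?(negbTE neqS'S) ?mulr0 //; apply: mnmS_inj.
Qed.

Lemma prod_affine_mpolyE (a b : 'I_n -> R) :
  \prod_(i < n) (a i *: 'X_i + (b i)%:MP) =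
  \sum_(S : {set 'I_n}) (\prod_(i in S) a i * \prod_(i in ~: S) b i) *: 'X_[mnmS S]
  :> {mpoly R[n]}.
Proof.
pose t (i : 'I_n) (x : bool) : {mpoly R[n]} := if x then a i *: 'X_i else (b i)%:MP.
transitivity (\prod_(i < n) \sum_(x : bool) t i x).
  by apply: eq_bigr => i _; rewrite big_bool /= addrC.
rewrite bigA_distr_bigA /= (reindex (fun S : {set 'I_n} => [ffun i => i \in S])) /=.
  apply: eq_bigr => S _; rewrite (bigID (mem S)) /=.
  rewrite (eq_bigr (fun i => (a i)%:MP * 'X_i)) => [|i iS]; last first.
    by rewrite ffunE /t iS mul_mpolyC.
  rewrite (eq_bigr (fun i => (b i)%:MP) (P := fun i => i \notin S)) => [|i iS]; last first.
    by rewrite ffunE /t (negbTE iS).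
  rewrite big_split /= prod_mpolyX_set -!rmorph_prod /= mulrAC -mpolyCM mul_mpolyC.
  by congr ((_ * _) *: _); apply: eq_bigl => i; rewrite inE.
exists (fun f : {ffun 'I_n -> bool} => [set i | f i]) => [S _|f _].
  by apply/setP => i; rewrite inE ffunE.
by apply/ffunP => i; rewrite ffunE inE.
Qed.

Definition Pcoef (z : 'I_n -> R) (S : {set 'I_n}) : R :=
  \prod_(i in S) z i * \prod_(i in ~: S) (1 - z i).

Lemma eq_Pcoef S (z z' : 'I_n -> R) : z =1 z' -> Pcoef z S = Pcoef z' S.
Proof. by move=> eq_z; congr (_ * _); apply: eq_bigr => i _; rewrite eq_z. Qed.

Lemma Pcoef_indicator (A S : {set 'I_n}) :
  Pcoef (fun i => (i \in A)%:R) S = (S == A)%:R.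
Proof.
rewrite /Pcoef; have [->|neqSA] := eqVneq S A.
  rewrite big1 => [|i]; last by move=> ->.
  by rewrite mul1r big1 // => i; rewrite inE => /negbTE->; rewrite subr0.
have [i] : exists i, (i \in S) != (i \in A).
  apply/existsP; apply: contraNT neqSA => /existsPn eqSA.
  by apply/eqP/setP => j; apply/eqP/negPn/eqSA.
case iS: (i \in S); case iA: (i \in A) => // _.
  by rewrite (bigD1 i) //= iA !mul0r.
by rewrite [X in _ * X](bigD1 i) ?inE ?iS //= iA subrr mul0r mulr0.
Qed.

End MultilinearExpansion.

Lemma rmorph_Pcoef (R R' : comNzRingType) (f : {rmorphism R -> R'}) n
    (z : 'I_n -> R) S :
  f (Pcoef z S) = Pcoef (f \o z) S.
Proof.
rewrite /Pcoef rmorphM !rmorph_prod; congr (_ * _).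
by apply: eq_bigr => i _; rewrite rmorphB rmorph1.
Qed.

Lemma G_SSSVE (F : fieldType) n k (S : {set 'I_n}) :
  G_SSSV F k S = \sum_(j < k) yvar F n j * Pcoef (zvar F j) S + 1.
Proof.
rewrite /G_SSSV /Q_SSSV /Q_SSV mcoeffD raddf_sum /=; congr (_ + _).
  apply: eq_bigr => j _; rewrite mcoeffCM /Pxz.
  under eq_bigr do rewrite mul_mpolyC.
  by rewrite prod_affine_mpolyE mcoeff_sum_mnmS.
under eq_bigr do rewrite -[X in _ + X]mpolyC1 -[X in X + _]scale1r.
by rewrite prod_affine_mpolyE mcoeff_sum_mnmS !big1_eq mulr1.
Qed.

Section ProductGates.
Variables (F : fieldType) (n : nat).

Definition univariate_form (i : 'I_n) (a b : F) : affine F n :=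
  (b, [ffun i' => if i' == i then a else 0]).

Lemma affine_poly_univariate i a b :
  affine_poly (univariate_form i a b) = a *: 'X_i + b%:MP.
Proof.
rewrite /affine_poly addrC (bigD1 i) //= big1 ?addr0 => [|j /negbTE neqji].
  by rewrite ffunE eqxx.
by rewrite ffunE neqji scale0r.
Qed.

Lemma affine_supp_univariate i a b : affine_supp (univariate_form i a b) \subset [set i].
Proof. by apply/subsetP => j; rewrite !inE ffunE; case: (j == i); rewrite ?eqxx. Qed.

Lemma sps_multilinear_gates (f : spsformula F n) :
  (forall P, P \in f -> sps_multilinear [:: P]) -> sps_multilinear f.
Proof. by move=> ml_f; apply/allP => P /ml_f; rewrite /sps_multilinear /= andbT. Qed.

Lemma univariate_gate_multilinear (f : 'I_n -> affine F n) :
  (forall i, affine_supp (f i) \subset [set i]) ->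
  sps_multilinear [:: [seq f i | i <- enum 'I_n]].
Proof.
move=> supp_f; rewrite /sps_multilinear /= andbT.
apply/forallP => j1; apply/forallP => j2; apply/implyP => lt_j12.
have size_gate : size [seq f i | i <- enum 'I_n] = n by rewrite size_map size_enum_ord.
have nth_gate (j : 'I_(size [seq f i | i <- enum 'I_n])) :
    nth (0, [ffun=> 0]) [seq f i | i <- enum 'I_n] j = f (cast_ord size_gate j).
  rewrite (nth_map (cast_ord size_gate j)) ?size_enum_ord ?(ltn_ord (cast_ord _ j)) //.
  by rewrite -[j : nat]/(nat_of_ord (cast_ord size_gate j)) nth_ord_enum.
rewrite !nth_gate; apply: (disjointWl (supp_f _)); apply: (disjointWr (supp_f _)).
rewrite disjoints1 inE; apply/eqP => /(congr1 val) /= eq_j12.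
by rewrite eq_j12 ltnn in lt_j12.
Qed.

Lemma univariate_gate_size (f : 'I_n -> affine F n) :
  (forall i, affine_supp (f i) \subset [set i]) ->
  (\sum_(l <- [seq f i | i <- enum 'I_n]) (1 + #|affine_supp l|) <= 2 * n)%N.
Proof.
move=> supp_f; rewrite big_map big_enum /=.
apply: (@leq_trans (\sum_(i < n) 2)); last by rewrite sum_nat_const card_ord mulnC.
by apply: leq_sum => i _; rewrite ltnS -(cards1 i) subset_leq_card.
Qed.

End ProductGates.

(* Sum gates carry no scalars, so [c] is absorbed into the first factor. *)
Definition product_gate (F : fieldType) n (c : F) (a b : 'I_n.+1 -> F) :
    seq (affine F n.+1) :=
  let d i := if i == ord0 then c else 1 in
  [seq univariate_form i (d i * a i) (d i * b i) | i <- enum 'I_n.+1].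

Section ProductGate.
Variables (F : fieldType) (n : nat) (c : F) (a b : 'I_n.+1 -> F).

Lemma product_gate_multilinear : sps_multilinear [:: product_gate c a b].
Proof. by apply: univariate_gate_multilinear => i; apply: affine_supp_univariate. Qed.

Lemma product_gate_size :
  (\sum_(l <- product_gate c a b) (1 + #|affine_supp l|) <= 2 * n.+1)%N.
Proof. by apply: univariate_gate_size => i; apply: affine_supp_univariate. Qed.

Lemma product_gate_poly :
  \prod_(l <- product_gate c a b) affine_poly l =
  c *: \prod_(i < n.+1) (a i *: 'X_i + (b i)%:MP).
Proof.
rewrite big_map big_enum /= big_ord_recl [in RHS]big_ord_recl scalerAl.
congr (_ * _); last first.
  by apply: eq_bigr => i _; rewrite affine_poly_univariate /= !mul1r.
by rewrite affine_poly_univariate eqxx scalerDr scalerA mpolyCM mul_mpolyC.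
Qed.

End ProductGate.

Section SSSVFormula.
Variables (F : fieldType) (n k : nat) (alpha : 'I_(nseed n.+1 k) -> F).

Let y j := (yvar F n.+1 j).@[alpha].
Let z j i := (zvar F j i).@[alpha].

Definition sssv_formula : spsformula F n.+1 :=
  [seq product_gate (y j) (z j) (fun i => 1 - z j i) | j <- enum 'I_k]
  ++ [:: product_gate 1 (fun=> 1) (fun=> 1)].

Lemma sssv_formula_multilinear : sps_multilinear sssv_formula.
Proof.
apply: sps_multilinear_gates => P; rewrite mem_cat mem_seq1.
by case/orP => [/mapP [j _ ->]|/eqP ->]; apply: product_gate_multilinear.
Qed.

Lemma sssv_formula_size : (sps_size sssv_formula <= 1 + k.+1 * (1 + 2 * n.+1))%N.
Proof.
rewrite /sps_size leq_add2l big_cat big_map big_enum big_seq1 /= mulSn addnC.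
rewrite leq_add ?leq_add2l ?product_gate_size //.
apply: (@leq_trans (\sum_(j < k) (1 + 2 * n.+1))); last by rewrite sum_nat_const card_ord.
by apply: leq_sum => j _; rewrite leq_add2l product_gate_size.
Qed.

Lemma sssv_formula_poly :
  sps_poly sssv_formula = \sum_(S : {set 'I_n.+1}) (G_SSSV F k S).@[alpha] *: 'X_[mnmS S].
Proof.
have G_alpha S : (G_SSSV F k S).@[alpha] = \sum_(j < k) y j * Pcoef (z j) S + 1.
  rewrite G_SSSVE mevalD meval1 raddf_sum /=; congr (_ + _).
  by apply: eq_bigr => j _; rewrite mevalM rmorph_Pcoef.
rewrite /sps_poly big_cat big_map big_enum big_seq1 /= product_gate_poly.
under [RHS]eq_bigr => S _ do rewrite G_alpha scalerDl scale1r scaler_suml.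
rewrite big_split /= exchange_big /=; congr (_ + _).
  apply: eq_bigr => j _; rewrite product_gate_poly prod_affine_mpolyE scaler_sumr.
  by apply: eq_bigr => S _; rewrite scalerA.
rewrite scale1r prod_affine_mpolyE; apply: eq_bigr => S _.
by rewrite !big1_eq mulr1 scale1r.
Qed.

End SSSVFormula.

Lemma G_SSSV_formula_size (F : fieldType) n k (alpha : 'I_(nseed n.+1 k) -> F) :
  computed_by_mlsps (1 + k.+1 * (1 + 2 * n.+1))%N%:R
    (\sum_(S : {set 'I_n.+1}) (G_SSSV F k S).@[alpha] *: 'X_[mnmS S]).
Proof.
exists (sssv_formula alpha); split.
- exact: sssv_formula_multilinear.
- by rewrite ler_nat sssv_formula_size.
- exact: sssv_formula_poly.
Qed.

Lemma small_nonempty_fiber (T U : eqType) (f : T -> U) (s : seq T) x0 x1 k :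
  x0 \in s -> x1 \in s -> f x0 != f x1 -> (size s <= 2 ^ k.+1)%N ->
  exists2 d, has (fun x => f x == d) s & (size [seq x <- s | f x == d] <= 2 ^ k)%N.
Proof.
move=> s_x0 s_x1 neq_f size_s.
have fibers_disjoint : (count (fun x => f x == f x0) s + count (fun x => f x == f x1) s
    <= 2 ^ k + 2 ^ k)%N.
  rewrite -count_predUI (@eq_count _ (predI _ _) pred0) ?count_pred0 ?addn0 => [|x /=].
    by rewrite addnn -mul2n -expnS (leq_trans (count_size _ _)).
  apply/negbTE/andP => -[/eqP -> /eqP eq_f].
  by rewrite eq_f eqxx in neq_f.
have [small0|big0] := leqP (count (fun x => f x == f x0) s) (2 ^ k).
  by exists (f x0); [apply/hasP; exists x0 | rewrite size_filter].
exists (f x1); first by apply/hasP; exists x1.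
rewrite size_filter -(leq_add2l (2 ^ k)); apply: leq_trans fibers_disjoint.
by rewrite leq_add2r ltnW.
Qed.

Section OneOutside.
Variables (R : comNzRingType) (N : nat).

Definition mnm_on (T : {set 'I_N}) (m : 'X_{1..N}) : 'X_{1..N} :=
  [multinom if i \in T then m i else 0%N | i < N].

Definition one_outside (T : {set 'I_N}) : N.-tuple {mpoly R[N]} :=
  [tuple if i \in T then 'X_i else 1 | i < N].

Lemma mnm_onU1_eq i T m m' :
  mnm_on (i |: T) m = mnm_on (i |: T) m' -> m i = m' i /\ mnm_on T m = mnm_on T m'.
Proof.
move/mnmP => eq_on; split; first by have := eq_on i; rewrite !mnmE setU11.
apply/mnmP => j; rewrite !mnmE; case: ifP => // jT.
by have := eq_on j; rewrite !mnmE in_setU1 jT orbT.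
Qed.

Lemma mcoeff_comp_one_outside (P : {mpoly R[N]}) T u :
  (P \mPo one_outside T)@_u = \sum_(m <- msupp P | mnm_on T m == u) P@_m.
Proof.
rewrite comp_mpolyEX raddf_sum /= [RHS]big_mkcond /=; apply: eq_bigr => m _.
have -> : 'X_[m] \mPo one_outside T = 'X_[mnm_on T m].
  rewrite comp_mpolyX [RHS]mpolyXE_id; apply: eq_bigr => i _.
  by rewrite tnth_mktuple mnmE; case: (i \in T); rewrite ?expr1n ?expr0.
by rewrite mcoeffZ mcoeffX; case: eqP; rewrite ?mulr1 ?mulr0.
Qed.

(* Any [2 ^ k] monomials contain one that is determined, among them, by its
   exponents on some [k] variables: split on a variable where two of them
   differ and recurse into the smaller class. *)
Lemma isolating_set k (M : seq 'X_{1..N}) : M != [::] -> (size M <= 2 ^ k)%N ->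
  exists (T : {set 'I_N}) m, [/\ (#|T| <= k)%N, m \in M &
                  {in M, forall m', mnm_on T m' = mnm_on T m -> m' = m}].
Proof.
elim: k M => [|k IH] [//|m0 M'] _ size_M.
  case: M' size_M => // _; exists set0, m0; rewrite cards0 mem_seq1.
  by split=> // m'; rewrite mem_seq1 => /eqP.
have [all_m0|/allPn [m1 M_m1 /= neq_m1m0]] := boolP (all (pred1 m0) (m0 :: M')).
  exists set0, m0; rewrite cards0 mem_head.
  by split=> // m' /(allP all_m0) /eqP.
have [i neq_i] : exists i, m0 i != m1 i.
  apply/existsP; apply: contraNT neq_m1m0 => /existsPn same.
  by apply/eqP/mnmP => i; apply/esym/eqP/negPn/same.
have [d has_d size_d] :=
  small_nonempty_fiber (f := fun m : 'X_{1..N} => m i) (mem_head m0 M') M_m1 neq_i size_M.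
rewrite has_filter in has_d.
have [T [m [card_T Md_m iso_m]]] := IH _ has_d size_d.
move: Md_m; rewrite mem_filter => /andP [/eqP m_d M_m].
exists (i |: T), m; split=> //; first by rewrite cardsU1 -add1n leq_add ?leq_b1.
move=> m' M_m' /mnm_onU1_eq [eq_i eq_T]; apply: iso_m eq_T.
by rewrite mem_filter eq_i m_d eqxx.
Qed.

Lemma sparse_comp_one_outside k (P : {mpoly R[N]}) :
  P != 0 -> (size (msupp P) <= 2 ^ k)%N ->
  exists2 T : {set 'I_N}, (#|T| <= k)%N & P \mPo one_outside T != 0.
Proof.
rewrite -msupp_eq0 => supp_neq0 size_P.
have [T [m [card_T P_m iso_m]]] := isolating_set supp_neq0 size_P.
exists T => //; move: (P_m); rewrite mcoeff_msupp; apply: contra_neq.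
move/(congr1 (mcoeff (mnm_on T m))); rewrite mcoeff_comp_one_outside mcoeff0.
rewrite big_seq_cond (eq_bigl (pred1 m)) => [|m' /=].
  by rewrite -big_filter filter_pred1_uniq ?msupp_uniq // big_cons big_nil addr0.
apply/andP/eqP => [[P_m' /eqP /(iso_m _ P_m')] //|->].
by rewrite P_m eqxx.
Qed.

End OneOutside.

Lemma eq_from_binary_digits n i i' : (i < 2 ^ n)%N -> (i' < 2 ^ n)%N ->
  (forall b, b < n -> odd (i %/ 2 ^ b) = odd (i' %/ 2 ^ b))%N -> i = i'.
Proof.
elim: n i i' => [|n IH] i i' lt_i lt_i' same_digits.
  by move: lt_i lt_i'; rewrite expn0 !ltnS !leqn0 => /eqP -> /eqP ->.
have half_eq : i./2 = i'./2.
  apply: IH; rewrite -?divn2 ?ltn_divLR -?expnSr // => b lt_bn.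
  by rewrite -!divnMA -expnS same_digits.
have := same_digits 0%N isT; rewrite expn0 !divn1 => odd_eq.
by rewrite -[i]odd_double_half -[i']odd_double_half half_eq odd_eq.
Qed.

Lemma set_of_index_inj n : injective (fun i : 'I_(2 ^ n) => set_of_index n i).
Proof.
move=> i i' /setP same; apply/val_inj/(eq_from_binary_digits (ltn_ord i) (ltn_ord i')).
move=> b lt_bn; by have := same (Ordinal lt_bn); rewrite !inE.
Qed.

Lemma sum_nth_map_Some (V : nmodType) (A : Type) (s : seq A) k (g : option A -> V) :
  g None = 0 -> (size s <= k)%N ->
  \sum_(j < k) g (nth None (map Some s) j) = \sum_(x <- s) g (Some x).
Proof.
move=> g0; elim: s k => [|x s IH] [|k] //= size_s.
- by rewrite big_ord0 big_nil.
- by rewrite big_nil big1 // => j _; rewrite nth_nil.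
by rewrite big_ord_recl big_cons /= IH.
Qed.

Lemma comp_mpolyA (R : comNzRingType) N M K (P : {mpoly R[N]})
    (t : N.-tuple {mpoly R[M]}) (w : M.-tuple {mpoly R[K]}) :
  (P \mPo t) \mPo w = P \mPo [tuple tnth t i \mPo w | i < N].
Proof.
rewrite [P \mPo t]comp_mpolyEX [P \mPo _]comp_mpolyEX raddf_sum /=.
apply: eq_bigr => m _; rewrite comp_mpolyZ !comp_mpolyX rmorph_prod /=.
by congr (_ *: _); apply: eq_bigr => i _; rewrite rmorphXn tnth_mktuple.
Qed.

Section IsolatingSeed.
Variables (F : fieldType) (n k : nat) (T : {set 'I_(2 ^ n)}).

Definition seed_target (j : 'I_k) : option 'I_(2 ^ n) := nth None (map Some (enum T)) j.

(* [y_j] becomes [X_a - 1] and [z_j] the binary digits of [a], for [a] the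
   [j]-th element of [T]; blocks beyond [#|T|] are set to zero. *)
Definition seed_value (v : 'I_(nseed n k)) : {mpoly F[2 ^ n]} :=
  match split v with
  | inl j => if seed_target j is Some a then 'X_a - 1 else 0
  | inr r =>
      let ji := enum_val (cast_ord (esym (mxvec_cast k n)) r) in
      if seed_target ji.1 is Some a then (ji.2 \in set_of_index n a)%:R else 0
  end.

Definition isolating_seed := [tuple seed_value v | v < nseed n k].

Lemma yvar_isolating_seed j :
  yvar F n j \mPo isolating_seed = if seed_target j is Some a then 'X_a - 1 else 0.
Proof.
by rewrite comp_mpolyXU -tnth_nth tnth_mktuple /seed_value (unsplitK (inl _ j)).
Qed.

Lemma zvar_isolating_seed j i :
  zvar F j i \mPo isolating_seed =
  if seed_target j is Some a then (i \in set_of_index n a)%:R else 0.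
Proof.
rewrite comp_mpolyXU -tnth_nth tnth_mktuple /seed_value.
by rewrite (unsplitK (inr _ (mxvec_index j i))) /= cast_ordK enum_rankK.
Qed.

Lemma G_SSSV_isolating_seed (i : 'I_(2 ^ n)) : (#|T| <= k)%N ->
  G_SSSV F k (set_of_index n i) \mPo isolating_seed = tnth (one_outside F T) i.
Proof.
move=> card_T; rewrite tnth_mktuple G_SSSVE rmorphD rmorph1 rmorph_sum /=.
under eq_bigr => j _ do rewrite rmorphM /= yvar_isolating_seed rmorph_Pcoef
  (eq_Pcoef _ (zvar_isolating_seed j)).
rewrite (sum_nth_map_Some (g := fun o => (if o is Some a then 'X_a - 1 else 0) *
  Pcoef (fun b => if o is Some a then (b \in set_of_index n a)%:R else 0) (set_of_index n i)))
  ?mul0r -?cardE // big_enum /=.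
under eq_bigr => a _ do rewrite Pcoef_indicator (inj_eq (@set_of_index_inj n)).
have [T_i|notT_i] := boolP (i \in T).
  rewrite (bigD1 i) //= eqxx mulr1 big1 ?addr0 ?subrK // => a /andP [_ neq_ai].
  by rewrite eq_sym (negbTE neq_ai) mulr0.
rewrite big1 ?add0r // => a T_a.
by rewrite (_ : i == a = false) ?mulr0 //; apply: contraNF notT_i => /eqP ->.
Qed.

End IsolatingSeed.

Lemma G_SSSV_hits_sparse (F : fieldType) n s (P : {mpoly F[2 ^ n]}) :
  (size (msupp P) <= s)%N ->
  (P != 0) = (P \mPo [tuple G_SSSV F (up_log 2 s) (set_of_index n i) | i < 2 ^ n] != 0).
Proof.
move=> size_P; have [->|P_neq0] := eqVneq P 0; first by rewrite comp_mpoly0 eqxx.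
have [T card_T PT_neq0] :=
  sparse_comp_one_outside P_neq0 (leq_trans size_P (up_logP s (ltnSn 1))).
have seed_P : (P \mPo [tuple G_SSSV F (up_log 2 s) (set_of_index n i) | i < 2 ^ n])
    \mPo isolating_seed F (up_log 2 s) T = P \mPo one_outside F T.
  rewrite comp_mpolyA; congr (_ \mPo _); apply: eq_from_tnth => i.
  by rewrite tnth_mktuple tnth_mktuple G_SSSV_isolating_seed.
by symmetry; apply: contraNneq PT_neq0 => PG_eq0; rewrite -seed_P PG_eq0 comp_mpoly0.
Qed.

Theorem corollary5p10 (F : fieldType) :
  exists p : {mpoly rat[2]},
  forall n s : nat, (1 <= n)%N -> (1 <= s)%N ->
    succinct_generator
      (p.@[fun i : 'I_2 => if i == 0 then (up_log 2 s)%:R else n%:R])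
      (@G_SSSV F n (up_log 2 s))
      (@sparse F (2 ^ n) s).
Proof.
exists (1 + ('X_0 + 1) * (1 + 'X_1 + 'X_1)) => -[//|n] s _ _; split.
  set k := up_log 2 s.
  have -> : (1 + ('X_0 + 1) * (1 + 'X_1 + 'X_1) : {mpoly rat[2]}).@[fun i : 'I_2 =>
      if i == 0 then k%:R else n.+1%:R] = (1 + k.+1 * (1 + 2 * n.+1))%N%:R.
    rewrite !(mevalD, mevalM, meval1, mevalXU) /= -addn1 !(natrD, natrM).
    by ring.
  exact: G_SSSV_formula_size.
exact: G_SSSV_hits_sparse.
Qed.
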